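(* Let $p$ be a prime with $p\mid n$, $e\in\mathbb{N}$, and let $\{R_j\}_{j\in J}$ be a system of representatives of the right cosets in $\Gamma_0(p^{e+1}n)\backslash\Gamma_0(pn)$. Then $\{B_pR_jB_p^{-1}\}_{j\in J}$ is a system of representatives of the right cosets in $\Gamma_0(p^en)\backslash\Gamma_0(n)$.
   Context: $B_p=\begin{pmatrix}p&0\\0&1\end{pmatrix}$; $\Gamma_0(N)=\{\begin{pmatrix}a&b\\c&d\end{pmatrix}\in SL(2,\mathbb{Z}):N\mid c\}$. A system of representatives $\{R_j\}$ of the right cosets in $H\backslash G$ means $G=\bigsqcup_jHR_j$ (disjoint union). For $g\in\Gamma_0(pn)$, $B_pgB_p^{-1}\in SL(2,\mathbb{Z})$. *)

(* Matrices over rat so that B_p^{-1} makes sense. *)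
From mathcomp Require Import all_boot all_order all_algebra.
Set Implicit Arguments. Unset Strict Implicit. Unset Printing Implicit Defensive.
Import Order.TTheory GRing.Theory Num.Theory.
Local Open Scope ring_scope.

Definition inSL2Z (A : 'M[rat]_2) : Prop :=
  (forall i j, A i j \is a Num.int) /\ \det A = 1.

Definition Gamma0 (N : nat) (A : 'M[rat]_2) : Prop :=
  inSL2Z A /\ exists k : int, A 1 0 = (N%:Z * k)%:~R.

Definition Bp (p : nat) : 'M[rat]_2 :=
  \matrix_(i < 2, j < 2) (if i == j then (if i == 0 then p%:R else 1) else 0).

Definition right_coset_reps (H G : 'M[rat]_2 -> Prop) (J : Type)
    (R : J -> 'M[rat]_2) : Prop :=
  (forall g, G g <-> exists j, exists h, H h /\ g = h *m R j) /\
  (forall i j g, (exists h, H h /\ g = h *m R i) ->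
                 (exists h, H h /\ g = h *m R j) -> i = j).

(* Conjugation X |-> B_p X B_p^-1 sends (a b; pc d) to (a pb; c d).  It thus
   identifies Gamma_0(pN) with the matrices of Gamma_0(N) whose upper right
   entry is divisible by p, and an element Y of Gamma_0(pn) is conjugated into
   Gamma_0(p^e n) exactly when Y lies in Gamma_0(p^(e+1) n); this transports
   the disjointness of the cosets.  For covering, when p | N every
   (a b; c d) in Gamma_0(N) is (1 ab; 0 1) times a matrix of that image,
   because b - ab d = -b^2 c by ad - bc = 1, and p | c. *)
From mathcomp Require Import all_boot all_order all_algebra.
From mathcomp Require Import ring.
Set Implicit Arguments. Unset Strict Implicit. Unset Printing Implicit Defensive.
Import Order.TTheory GRing.Theory Num.Theory.
Local Open Scope ring_scope.

Lemma mx2_ext (R : Type) (A B : 'M[R]_2) :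
  A 0 0 = B 0 0 -> A 0 1 = B 0 1 -> A 1 0 = B 1 0 -> A 1 1 = B 1 1 -> A = B.
Proof.
have ord2 (i : 'I_2) : i = 0 \/ i = 1.
  by case: i => -[|[|//]] Hi; [left | right]; apply/val_inj.
move=> e00 e01 e10 e11; apply/matrixP => i j.
by case: (ord2 i) => ->; case: (ord2 j) => ->.
Qed.

Lemma det_mx2x2 (R : comPzRingType) (A : 'M[R]_2) :
  \det A = A 0 0 * A 1 1 - A 0 1 * A 1 0.
Proof.
rewrite (expand_det_row _ 0) !big_ord_recl big_ord0 addr0 /cofactor.
rewrite !det_mx11 !mxE /= expr0 expr1 mul1r mulN1r mulrN.
by congr (_ * _ - _ * _); apply: congr2; apply/val_inj.
Qed.

Definition mx2 (a b c d : int) : 'M[rat]_2 :=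
  \matrix_(i < 2, j < 2)
    (if i == 0 then (if j == 0 then a else b) else (if j == 0 then c else d))%:~R.

Lemma mul_mx2 a b c d a' b' c' d' : mx2 a b c d *m mx2 a' b' c' d' =
  mx2 (a * a' + b * c') (a * b' + b * d') (c * a' + d * c') (c * b' + d * d').
Proof.
by apply: mx2_ext; rewrite !mxE !big_ord_recl big_ord0 !mxE /= !intrD !intrM addr0.
Qed.

Lemma det_mx2 a b c d : \det (mx2 a b c d) = (a * d - b * c)%:~R.
Proof. by rewrite det_mx2x2 !mxE /= intrB !intrM. Qed.

Lemma mx2_1 : mx2 1 0 0 1 = 1%:M.
Proof. by apply: mx2_ext; rewrite !mxE. Qed.

Lemma unitmx_mx2 a b c d : a * d - b * c = 1 -> mx2 a b c d \in unitmx.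
Proof. by move=> det1; rewrite unitmxE det_mx2 det1 unitr1. Qed.

Lemma invmx_mx2 a b c d :
  a * d - b * c = 1 -> invmx (mx2 a b c d) = mx2 d (- b) (- c) a.
Proof.
move=> det1; have inv_r : mx2 a b c d *m mx2 d (- b) (- c) a = 1%:M.
  by rewrite mul_mx2 -mx2_1 -det1; congr mx2; ring.
by rewrite -[RHS](mulKmx (unitmx_mx2 det1)) inv_r mulmx1.
Qed.

Lemma Gamma0_mx2 N a b c d :
  Gamma0 N (mx2 a b c d) <-> a * d - b * c = 1 /\ exists k : int, c = N%:Z * k.
Proof.
split=> [[[_ det1] [k c_k]] | [det1 [k c_k]]].
  split; first by apply: (@intr_inj rat); rewrite -det_mx2 det1.
  by exists k; apply: (@intr_inj rat); rewrite -c_k mxE.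
split; last by exists k; rewrite mxE /= c_k.
split; last by rewrite det_mx2 det1.
by move=> i j; rewrite mxE; case: ifP => _; case: ifP => _; exact: intr_int.
Qed.

Lemma Gamma0E N A : Gamma0 N A ->
  exists a b k d, A = mx2 a b (N%:Z * k) d /\ a * d - b * (N%:Z * k) = 1.
Proof.
move=> GA; have [[int_A _] _] := GA.
have [a a_E] := intrP (int_A 0 0); have [b b_E] := intrP (int_A 0 1).
have [c c_E] := intrP (int_A 1 0); have [d d_E] := intrP (int_A 1 1).
have A_E : A = mx2 a b c d by apply: mx2_ext; rewrite !mxE.
move: GA; rewrite A_E => /Gamma0_mx2 [det1 [k c_k]].
by exists a, b, k, d; rewrite -c_k.
Qed.

Lemma Gamma0_1 N : Gamma0 N 1%:M.
Proof. by rewrite -mx2_1; apply/Gamma0_mx2; split; [|exists 0]; ring. Qed.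

Lemma Gamma0_mul N A B : Gamma0 N A -> Gamma0 N B -> Gamma0 N (A *m B).
Proof.
move=> /Gamma0E [a [b [k [d [-> det1]]]]] /Gamma0E [a' [b' [k' [d' [-> det1']]]]].
rewrite mul_mx2; apply/Gamma0_mx2; split; last by exists (k * a' + d * k'); ring.
transitivity ((a * d - b * (N%:Z * k)) * (a' * d' - b' * (N%:Z * k'))); first ring.
by rewrite det1 det1' mulr1.
Qed.

Lemma Gamma0_inv N A : Gamma0 N A -> Gamma0 N (invmx A).
Proof.
move=> /Gamma0E [a [b [k [d [-> det1]]]]].
by rewrite invmx_mx2 //; apply/Gamma0_mx2; split; [rewrite -det1 | exists (- k)]; ring.
Qed.

Lemma Gamma0_unitmx N A : Gamma0 N A -> A \in unitmx.
Proof. by move=> /Gamma0E [a [b [k [d [-> det1]]]]]; exact: unitmx_mx2. Qed.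

Lemma Gamma0_dvd N M A : (N %| M)%N -> Gamma0 M A -> Gamma0 N A.
Proof.
move=> /dvdnP [m ->] /Gamma0E [a [b [k [d [-> det1]]]]].
by apply/Gamma0_mx2; split=> //; exists (m%:Z * k); rewrite PoszM; ring.
Qed.

Lemma Gamma0_unipotent N u : Gamma0 N (mx2 1 u 0 1).
Proof. by apply/Gamma0_mx2; split; [|exists 0]; ring. Qed.

Definition conjBp p (X : 'M[rat]_2) := Bp p *m X *m invmx (Bp p).

Section ConjugationByBp.

Variable p : nat.
Hypothesis p_gt0 : (0 < p)%N.

Lemma Bp_mx2 : Bp p = mx2 p%:Z 0 0 1.
Proof. by apply: mx2_ext; rewrite !mxE. Qed.

Lemma unitmx_Bp : Bp p \in unitmx.
Proof. by rewrite unitmxE Bp_mx2 det_mx2 unitfE mulr1 mulr0 subr0 intr_eq0 -lt0n. Qed.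

Lemma conjBp_mul X Y : conjBp p (X *m Y) = conjBp p X *m conjBp p Y.
Proof. by rewrite /conjBp !mulmxA mulmxKV ?unitmx_Bp. Qed.

Lemma conjBp_mx2 a b c d : conjBp p (mx2 a b (p%:Z * c) d) = mx2 a (p%:Z * b) c d.
Proof.
apply: (canLR (mulmxK unitmx_Bp)).
by rewrite Bp_mx2 !mul_mx2; congr mx2; ring.
Qed.

Lemma Gamma0_conjBp_mx2 N a b c d :
  Gamma0 (p * N) (mx2 a b (p%:Z * c) d) <-> Gamma0 N (mx2 a (p%:Z * b) c d).
Proof.
have p_neq0 : p%:Z != 0 by rewrite eqz_nat -lt0n.
rewrite !Gamma0_mx2 PoszM.
have -> : a * d - p%:Z * b * c = a * d - b * (p%:Z * c) by ring.
split=> -[det1 [k c_k]]; split=> //; exists k.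
  by apply: (mulfI p_neq0); rewrite c_k mulrA.
by rewrite c_k mulrA.
Qed.

Lemma Gamma0_conjBp N X : Gamma0 (p * N) X -> Gamma0 N (conjBp p X).
Proof.
move=> GX; have [a [b [k [d [X_E _]]]]] := Gamma0E GX.
by move: GX; rewrite X_E PoszM -mulrA conjBp_mx2 => /Gamma0_conjBp_mx2.
Qed.

Lemma Gamma0_conjBpK N X : Gamma0 p X -> Gamma0 N (conjBp p X) -> Gamma0 (p * N) X.
Proof.
by move=> /Gamma0E [a [b [k [d [-> _]]]]]; rewrite conjBp_mx2 => /Gamma0_conjBp_mx2.
Qed.

Lemma Gamma0_conjBp_coset M X Y h : Gamma0 p X -> Gamma0 p Y -> Gamma0 M h ->
  conjBp p Y = h *m conjBp p X -> Gamma0 (p * M) (Y *m invmx X).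
Proof.
move=> GX GY Gh conj_Y; have GYX := Gamma0_mul GY (Gamma0_inv GX).
apply: Gamma0_conjBpK => //; suff -> : conjBp p (Y *m invmx X) = h by [].
have conj_X_unit : conjBp p X \in unitmx.
  by apply: (@Gamma0_unitmx 1); apply: Gamma0_conjBp; rewrite muln1.
apply: (can_inj (mulmxK conj_X_unit)).
by rewrite /= -conjBp_mul mulmxKV ?(Gamma0_unitmx GX).
Qed.

Lemma Gamma0_unipotent_conjBp N g : (p %| N)%N -> Gamma0 N g ->
  exists u X, Gamma0 (p * N) X /\ g = mx2 1 u 0 1 *m conjBp p X.
Proof.
move=> /dvdnP [N' N_E] Gg; have [a [b [k [d [g_E det1]]]]] := Gamma0E Gg.
pose u := b * a.
pose X := mx2 (a - u * (N%:Z * k)) (- (b * b * N'%:Z * k)) (p%:Z * (N%:Z * k)) d.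
have Y_E : mx2 1 (- u) 0 1 *m g = conjBp p X.
  rewrite conjBp_mx2 g_E mul_mx2; congr mx2; try ring.
  transitivity (b * (a * d - b * (N%:Z * k)) - u * d); first by rewrite det1; ring.
  by rewrite /u N_E PoszM; ring.
exists u, X; split.
  apply/Gamma0_conjBp_mx2; rewrite -conjBp_mx2 -Y_E.
  exact: Gamma0_mul (Gamma0_unipotent _ _) Gg.
by rewrite -Y_E mulmxA mul_mx2 !(mulr0, mul0r, mulr1, mul1r, addr0) addNr mx2_1 mul1mx.
Qed.

End ConjugationByBp.

Theorem mainTheorem10 (p n e : nat) (J : Type) (R : J -> 'M[rat]_2) :
  prime p -> (p %| n)%N ->
  right_coset_reps (Gamma0 (p ^ e.+1 * n)) (Gamma0 (p * n)) R ->
  right_coset_reps (Gamma0 (p ^ e * n)) (Gamma0 n)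
    (fun j => Bp p *m R j *m invmx (Bp p)).
Proof.
move=> p_prime p_dvd_n [cover disjoint].
have p_gt0 := prime_gt0 p_prime.
have pe1n : (p ^ e.+1 * n = p * (p ^ e * n))%N by rewrite expnS mulnA.
have in_coset j : exists h, Gamma0 (p ^ e.+1 * n) h /\ R j = h *m R j.
  by exists 1%:M; rewrite mul1mx; split=> //; exact: Gamma0_1.
have GR j : Gamma0 (p * n) (R j) by apply/cover; exists j.
have GpR j : Gamma0 p (R j) by apply: Gamma0_dvd (GR j); exact: dvdn_mulr.
split=> [g | i j g [h1 [Gh1 g_E1]] [h2 [Gh2 g_E2]]].
- split=> [Gg | [j [h [Gh ->]]]]; last first.
    apply: Gamma0_mul (Gamma0_conjBp p_gt0 (GR j)).
    by apply: Gamma0_dvd Gh; exact: dvdn_mull.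
  have [u [X [GX ->]]] := Gamma0_unipotent_conjBp p_gt0 p_dvd_n Gg.
  have [j [h [Gh ->]]] := (cover X).1 GX.
  exists j, (mx2 1 u 0 1 *m conjBp p h); rewrite conjBp_mul // mulmxA; split=> //.
  by apply: Gamma0_mul (Gamma0_unipotent _ _) (Gamma0_conjBp p_gt0 _); rewrite -pe1n.
- have conj_Rj : conjBp p (R j) = (invmx h2 *m h1) *m conjBp p (R i).
    by rewrite -mulmxA -g_E1 g_E2 mulKmx // (Gamma0_unitmx Gh2).
  have Gh : Gamma0 (p ^ e * n) (invmx h2 *m h1) := Gamma0_mul (Gamma0_inv Gh2) Gh1.
  have := Gamma0_conjBp_coset p_gt0 (GpR i) (GpR j) Gh conj_Rj.
  rewrite -pe1n => G_RjRi; apply: (disjoint i j (R j) _ (in_coset j)).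
  by exists (R j *m invmx (R i)); rewrite mulmxKV // (Gamma0_unitmx (GR i)).
Qed.
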